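(* Let $V$ be a non-empty finite linearly ordered set, and let $\mathscr{X}$ be a system of non-empty subsets of $V$ such that $\max X<\max V$ for every $X\in\mathscr{X}$. Then the number of subsets of $V$ of even cardinality that do not include any $X\in\mathscr{X}$ as a subset equals the number of subsets of $V$ of odd cardinality that do not include any $X\in\mathscr{X}$ as a subset. *)

From mathcomp Require Import all_boot all_order.
Set Implicit Arguments.
Unset Strict Implicit.
Import Order.TTheory.
Local Open Scope order_scope.

(* The maximum of a finite set X of a nonempty finite totally ordered type
   (finTBOrderType).  Meaningful when X is nonempty (default \top otherwise). *)
Definition setmax (d : Order.disp_t) (T : finTBOrderType d) (X : {set T}) : T :=
  if [pick x in X] is Some x0 then [arg max_(i > x0 in X) i] else \top.

Definition free_sets (d : Order.disp_t) (T : finTBOrderType d)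
  (Xs : {set {set T}}) (par : bool) : {set {set T}} :=
  [set A : {set T} | (odd #|A| == par) && [forall X in Xs, ~~ (X \subset A)]].
Arguments setmax {d T} X.
Arguments free_sets {d T} Xs par.

(** Toggling the top element is an involution on subsets that flips the parity
    of the cardinality; since every forbidden set misses the top element, it
    maps free sets of one parity bijectively onto free sets of the other. *)
From mathcomp Require Import all_boot all_order.
Import Order.TTheory.
Local Open Scope order_scope.

Section Toggle.

Variables (T : finType) (a : T).

Definition toggle (A : {set T}) : {set T} :=
  if a \in A then A :\ a else a |: A.

Lemma toggleK : involutive toggle.
Proof.
move=> A; rewrite {2}/toggle; case: ifP => aA; rewrite /toggle.
  by rewrite setD11 setD1K.
by rewrite setU11 setU1K // aA.
Qed.

Lemma odd_card_toggle (A : {set T}) : odd #|toggle A| = ~~ odd #|A|.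
Proof.
rewrite /toggle; case: ifP => aA; last by rewrite cardsU1 aA.
by rewrite [in RHS](cardsD1 a A) aA oddD negbK.
Qed.

Lemma subset_toggle (X A : {set T}) :
  a \notin X -> (X \subset toggle A) = (X \subset A).
Proof.
move=> aNX; rewrite /toggle; case: ifP => _.
  by rewrite subsetD1 aNX andbT.
apply/idP/idP => [XaA | /subset_trans->//]; last exact: subsetUr.
apply/subsetP => x Xx; move: (subsetP XaA x Xx); rewrite in_setU1.
by case: eqP => // xa; rewrite -xa Xx in aNX.
Qed.

End Toggle.

Arguments toggle {T}.

Lemma le_setmax (d : Order.disp_t) (T : finTBOrderType d) (X : {set T}) x :
  x \in X -> x <= setmax X.
Proof.
rewrite /setmax; case: pickP => [x0 Xx0 | /(_ x)/negbT/negP//].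
by case: (arg_maxP (fun i : T => i) Xx0) => m _ /(_ x).
Qed.

Section FreeSets.

Variables (d : Order.disp_t) (T : finTBOrderType d) (Xs : {set {set T}}).

Lemma toggle_free_sets a par (A : {set T}) :
  (forall X, X \in Xs -> a \notin X) ->
  (toggle a A \in free_sets Xs par) = (A \in free_sets Xs (~~ par)).
Proof.
move=> aNXs; rewrite !inE odd_card_toggle -eqb_negLR.
congr (_ && _); apply: eq_forallb_in => X /aNXs aNX.
by rewrite subset_toggle.
Qed.

Lemma card_free_sets_avoid a :
  (forall X, X \in Xs -> a \notin X) ->
  #|free_sets Xs false| = #|free_sets Xs true|.
Proof.
move=> aNXs; rewrite -(card_preimset _ (can_inj (toggleK _ a))).
by apply: eq_card => A; rewrite inE toggle_free_sets.
Qed.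

End FreeSets.

Theorem lemma2 (d : Order.disp_t) (T : finTBOrderType d) (Xs : {set {set T}})
  (hne : forall X, X \in Xs -> X != set0)
  (hmax : forall X, X \in Xs -> setmax X < \top) :
  #|free_sets Xs false| = #|free_sets Xs true|.
Proof.
apply: (@card_free_sets_avoid _ _ _ \top) => X /hmax maxX_lt_top.
by apply/negP => /le_setmax; rewrite leNgt maxX_lt_top.
Qed.
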